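(* Assume that the spectra $\Lambda_N[T]$, $\Lambda_D[T]$, $\Lambda_{M_1}[T]$, $\Lambda_{M_2}[T]$, $\Lambda_P[2T]$, $\Lambda_A[2T]$, $\Lambda_N[2T]$, $\Lambda_D[2T]$, $\Lambda_P[4T]$ are all nonempty, that each has a first (smallest) eigenvalue, that this first eigenvalue is simple, and that its eigenfunction has constant sign. Denote these first eigenvalues by $\lambda_0^N[T]$, $\lambda_0^D[T]$, $\lambda_0^{M_1}[T]$, $\lambda_0^{M_2}[T]$, $\lambda_0^P[2T]$, $\lambda_0^A[2T]$, $\lambda_0^N[2T]$, $\lambda_0^D[2T]$, $\lambda_0^P[4T]$. Then, for any $a_0,\dots,a_{2n-1}\in L^1(I)$: 1. $\lambda_0^N[T]=\lambda_0^P[2T]<\lambda_0^D[T]$; 2. $\lambda_0^N[T]=\lambda_0^N[2T]<\lambda_0^{M_1}[T]$; 3. $\lambda_0^N[T]=\lambda_0^P[4T]$; 4. $\lambda_0^{M_2}[T]=\lambda_0^D[2T]<\lambda_0^D[T]$; 5. $\lambda_0^N[T]<\lambda_0^{M_2}[T]$; 6. $\lambda_0^A[2T]=\min\{\lambda_0^{M_1}[T],\lambda_0^{M_2}[T]\}$.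
   Context: Fix $n\ge 1$, $T>0$, $I=[0,T]$, $J=[0,2T]$. $W^{2n,1}(K)$: $u\in C^{2n-1}(K)$ with $u^{(2n-1)}$ absolutely continuous. Let $a_0,\dots,a_{2n-1}$ be integrable on $I$, $Lu=u^{(2n)}+\sum_{k=0}^{2n-1}a_ku^{(k)}$ on $I$. $\widetilde L u=u^{(2n)}+\sum_{k=0}^{n-1}(\hat a_{2k+1}u^{(2k+1)}+\tilde a_{2k}u^{(2k)})$ on $J$, where $\tilde a_{2k}=a_{2k}$, $\hat a_{2k+1}=a_{2k+1}$ on $I$, and $\tilde a_{2k}(t)=a_{2k}(2T-t)$, $\hat a_{2k+1}(t)=-a_{2k+1}(2T-t)$ for $t\in(T,2T]$; $\widetilde{\widetilde L}$ on $[0,4T]$ is obtained by the same construction from $\widetilde L$ (reflection about $2T$). For an operator $M$, $M[\lambda]u=Mu+\lambda u$; $\lambda$ is an eigenvalue of $M$ on $X$ if $M[\lambda]u=0$ a.e. has a nontrivial solution $u\in X$ (an eigenfunction). Spaces ($k=0,\dots,n-1$ unless stated): $X_{N,T}$: $u^{(2k+1)}(0)=u^{(2k+1)}(T)=0$; $X_{D,T}$: $u^{(2k)}(0)=u^{(2k)}(T)=0$; $X_{M_1,T}$: $u^{(2k+1)}(0)=u^{(2k)}(T)=0$; $X_{M_2,T}$: $u^{(2k)}(0)=u^{(2k+1)}(T)=0$ (in $W^{2n,1}(I)$); $X_{P,2T}$: $u^{(k)}(0)=u^{(k)}(2T)$, $k=0,\dots,2n-1$; $X_{A,2T}$: $u^{(k)}(0)=-u^{(k)}(2T)$,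 $k=0,\dots,2n-1$; $X_{N,2T}$: $u^{(2k+1)}(0)=u^{(2k+1)}(2T)=0$; $X_{D,2T}$: $u^{(2k)}(0)=u^{(2k)}(2T)=0$ (in $W^{2n,1}(J)$); $X_{P,4T}$: $u^{(k)}(0)=u^{(k)}(4T)$, $k=0,\dots,2n-1$. $\Lambda_N[T],\Lambda_D[T],\Lambda_{M_1}[T],\Lambda_{M_2}[T]$ are the eigenvalue sets of $L$ on $X_{N,T},X_{D,T},X_{M_1,T},X_{M_2,T}$; $\Lambda_P[2T],\Lambda_A[2T],\Lambda_N[2T],\Lambda_D[2T]$ those of $\widetilde L$ on $X_{P,2T},X_{A,2T},X_{N,2T},X_{D,2T}$; $\Lambda_P[4T]$ that of $\widetilde{\widetilde L}$ on $X_{P,4T}$. *)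

From Stdlib Require Import Reals Lra Lia.
Open Scope R_scope.

Fixpoint rsum (f : nat -> R) (m : nat) : R :=
  match m with O => 0 | S p => rsum f p + f p end.

(* derivative of f at x relative to the closed interval [a,b]
   (one-sided at the endpoints) *)
Definition deriv_within (a b : R) (f : R -> R) (x l : R) : Prop :=
  forall eps, 0 < eps -> exists delta, 0 < delta /\
    forall h, h <> 0 -> Rabs h < delta -> a <= x + h <= b ->
      Rabs ((f (x + h) - f x) / h - l) < eps.

Definition abs_cont (a b : R) (f : R -> R) : Prop :=
  forall eps, 0 < eps -> exists delta, 0 < delta /\
    forall (m : nat) (x y : nat -> R),
      (forall i, (i < m)%nat -> a <= x i <= y i /\ y i <= b) ->
      (forall i, (S i < m)%nat -> y i <= x (S i)) ->
      rsum (fun i => y i - x i) m < delta ->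
      rsum (fun i => Rabs (f (y i) - f (x i))) m < eps.

Definition negligible (N : R -> Prop) : Prop :=
  forall eps, 0 < eps -> exists (c l : nat -> R),
    (forall i, 0 <= l i) /\
    (forall x, N x -> exists i, c i <= x <= c i + l i) /\
    (forall m, rsum l m <= eps).

Definition ae_on (a b : R) (P : R -> Prop) : Prop :=
  exists N, negligible N /\ forall t, a <= t <= b -> ~ N t -> P t.

(* f in L^1(a,b): characterized (Lebesgue) as the a.e. derivative of an
   absolutely continuous function on [a,b] *)
Definition L1 (a b : R) (f : R -> R) : Prop :=
  exists F, abs_cont a b F /\
    ae_on a b (fun t => deriv_within a b F t (f t)).

(* d is the family of derivatives (d k = u^(k)) of a function u = d 0 in
   W^{2n,1}(a,b): u in C^{2n-1}[a,b], u^(2n-1) absolutely continuous *)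
Definition W2n1 (n : nat) (a b : R) (d : nat -> R -> R) : Prop :=
  (forall k, (k < 2 * n - 1)%nat -> forall x, a <= x <= b ->
     deriv_within a b (d k) x (d (S k) x)) /\
  abs_cont a b (d (2 * n - 1)%nat).

(* u is an eigenfunction with eigenvalue lam of the operator
   M u = u^(2n) + sum_{k<2n} c_k u^(k) on [0,b] with boundary conditions bc
   (bc is a condition on the derivative family) *)
Definition eigfun (n : nat) (b : R) (c : nat -> R -> R)
  (bc : (nat -> R -> R) -> Prop) (lam : R) (u : R -> R) : Prop :=
  exists d : nat -> R -> R,
    (forall t, 0 <= t <= b -> d O t = u t) /\
    W2n1 n 0 b d /\ bc d /\
    (exists t, 0 <= t <= b /\ u t <> 0) /\
    ae_on 0 b (fun t => exists v,
       deriv_within 0 b (d (2 * n - 1)%nat) t v /\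
       v + rsum (fun k => c k t * d k t) (2 * n) + lam * u t = 0).

Definition eigval n b c bc (lam : R) : Prop := exists u, eigfun n b c bc lam u.

Definition first_eig n b c bc (lam0 : R) : Prop :=
  eigval n b c bc lam0 /\
  (forall mu, eigval n b c bc mu -> lam0 <= mu) /\
  exists u0, eigfun n b c bc lam0 u0 /\
    ((forall t, 0 <= t <= b -> 0 <= u0 t) \/
     (forall t, 0 <= t <= b -> u0 t <= 0)) /\
    (forall u, eigfun n b c bc lam0 u ->
       exists alpha, forall t, 0 <= t <= b -> u t = alpha * u0 t).

Definition bc_N n b (d : nat -> R -> R) : Prop :=
  forall k, (k < n)%nat -> d (2*k+1)%nat 0 = 0 /\ d (2*k+1)%nat b = 0.
Definition bc_D n b (d : nat -> R -> R) : Prop :=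
  forall k, (k < n)%nat -> d (2*k)%nat 0 = 0 /\ d (2*k)%nat b = 0.
Definition bc_M1 n b (d : nat -> R -> R) : Prop :=
  forall k, (k < n)%nat -> d (2*k+1)%nat 0 = 0 /\ d (2*k)%nat b = 0.
Definition bc_M2 n b (d : nat -> R -> R) : Prop :=
  forall k, (k < n)%nat -> d (2*k)%nat 0 = 0 /\ d (2*k+1)%nat b = 0.
Definition bc_P n b (d : nat -> R -> R) : Prop :=
  forall k, (k < 2 * n)%nat -> d k 0 = d k b.
Definition bc_A n b (d : nat -> R -> R) : Prop :=
  forall k, (k < 2 * n)%nat -> d k 0 = - d k b.

Definition refl_coef (T : R) (c : nat -> R -> R) (k : nat) (t : R) : R :=
  if Rle_dec t T then c k t
  else if Nat.even k then c k (2 * T - t) else - c k (2 * T - t).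

(* Mirroring a derivative family about p, d_k(t) |-> s (-1)^k d_k(2p - t)
   with s = +-1, maps solutions of ~L[lam] u = 0 to solutions, and a
   solution on [0,p] glued with its mirror image is a solution on [0,2p]
   when both agree at p.  This yields three comparison principles:
   - extension: an eigenfunction on [0,T] extends to one on [0,2T], so the
     first eigenvalue on [0,2T] is not larger;
   - odd extension: if the extension is odd about T it cannot be a multiple
     of the sign-constant first eigenfunction, so the inequality is strict;
   - restriction: by simplicity and constant sign the first eigenfunction on
     [0,2T] is even about T, hence restricts to an eigenfunction on [0,T]. *)

From Stdlib Require Import Reals Lra Lia.
Open Scope R_scope.

Lemma rsum_ext f g m :
  (forall i, (i < m)%nat -> f i = g i) -> rsum f m = rsum g m.
Proof.
  induction m as [|m IH]; intros H; simpl; [reflexivity|].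
  rewrite IH by (intros; apply H; lia). rewrite H by lia. reflexivity.
Qed.

Lemma rsum_le f g m :
  (forall i, (i < m)%nat -> f i <= g i) -> rsum f m <= rsum g m.
Proof.
  induction m as [|m IH]; intros H; simpl; [lra|].
  assert (rsum f m <= rsum g m) by (apply IH; intros; apply H; lia).
  assert (f m <= g m) by (apply H; lia). lra.
Qed.

Lemma rsum_plus f g m : rsum (fun i => f i + g i) m = rsum f m + rsum g m.
Proof. induction m as [|m IH]; simpl; [lra|]. rewrite IH. ring. Qed.

Lemma rsum_scal s f m : rsum (fun i => s * f i) m = s * rsum f m.
Proof. induction m as [|m IH]; simpl; [lra|]. rewrite IH. ring. Qed.

Lemma rsum_nonneg f m : (forall i, (i < m)%nat -> 0 <= f i) -> 0 <= rsum f m.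
Proof.
  intros H. apply Rle_trans with (rsum (fun _ => 0) m).
  - clear H. induction m; simpl; lra.
  - apply rsum_le. exact H.
Qed.

Lemma rsum_mono_len f m m' :
  (forall i, 0 <= f i) -> (m <= m')%nat -> rsum f m <= rsum f m'.
Proof. intros H Hm. induction Hm; simpl; [lra|]. specialize (H m0). lra. Qed.

Lemma rsum_first f m : rsum f (S m) = f O + rsum (fun j => f (S j)) m.
Proof. induction m as [|m IH]; simpl in *; [lra|]. rewrite IH. ring. Qed.

Lemma rsum_rev m : forall f, rsum (fun i => f (m - 1 - i)%nat) m = rsum f m.
Proof.
  induction m as [|m IH]; intros f; [reflexivity|].
  change (rsum (fun i => f (S m - 1 - i)%nat) m + f (S m - 1 - m)%nat = rsum f (S m)).
  rewrite rsum_first. replace (S m - 1 - m)%nat with O by lia.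
  rewrite (rsum_ext _ (fun i => (fun j => f (S j)) (m - 1 - i)%nat)).
  - rewrite (IH (fun j => f (S j))). ring.
  - intros i Hi. f_equal. lia.
Qed.

(* The signs (-1)^k produced by differentiating t |-> u(2p - t). *)

Lemma sign_parity k : (-1)^k = if Nat.even k then 1 else -1.
Proof.
  induction k as [|k IH]; [reflexivity|]. simpl pow. rewrite IH.
  rewrite Nat.even_succ, <- Nat.negb_even. destruct (Nat.even k); simpl; lra.
Qed.

Lemma sign_sq k : (-1)^k * (-1)^k = 1.
Proof. rewrite sign_parity. destruct (Nat.even k); lra. Qed.

Lemma sign_even j : (-1)^(2*j) = 1.
Proof. apply pow_1_even. Qed.

Lemma sign_odd j : (-1)^(2*j+1) = -1.
Proof. rewrite Nat.add_1_r. apply pow_1_odd. Qed.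

Lemma sign_top n : (1 <= n)%nat -> (-1)^(2*n-1) = -1.
Proof. intros. replace (2*n-1)%nat with (2*(n-1)+1)%nat by lia. apply sign_odd. Qed.

Lemma parity_split n k : (k < 2*n)%nat ->
  (exists j, (j < n)%nat /\ k = (2*j)%nat) \/ (exists j, (j < n)%nat /\ k = (2*j+1)%nat).
Proof.
  intros H. destruct (Nat.Even_or_Odd k) as [[j Hj]|[j Hj]];
    [left|right]; exists j; split; lia.
Qed.

(* Null sets: stable under points, reflections and finite unions, so that
   "almost everywhere" survives mirroring and gluing. *)

Lemma negligible_point p : negligible (fun t => t = p).
Proof.
  intros eps He. exists (fun _ => p), (fun _ => 0). split; [intros; lra|]. split.
  - intros x ->. exists O. lra.
  - intros m. induction m; simpl; lra.
Qed.

Lemma negligible_reflect N p : negligible N -> negligible (fun t => N (p - t)).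
Proof.
  intros H eps He. destruct (H eps He) as (c & l & Hl & Hcov & Hsum).
  exists (fun i => p - c i - l i), l. split; [exact Hl|]. split; [|exact Hsum].
  intros x Hx. destruct (Hcov _ Hx) as [i Hi]. exists i. lra.
Qed.

Definition interleave (f g : nat -> R) (i : nat) : R :=
  if Nat.even i then f (Nat.div2 i) else g (Nat.div2 i).

Lemma interleave_even f g i : interleave f g (2*i) = f i.
Proof.
  unfold interleave. rewrite Nat.even_mul. simpl Nat.even.
  rewrite Nat.div2_double. reflexivity.
Qed.

Lemma interleave_odd f g i : interleave f g (S (2*i)) = g i.
Proof.
  unfold interleave. rewrite Nat.div2_succ_double, Nat.even_succ,
    <- Nat.negb_even, Nat.even_mul. reflexivity.
Qed.

Lemma rsum_interleave f g m : rsum (interleave f g) (2*m) = rsum f m + rsum g m.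
Proof.
  induction m as [|m IH]; [simpl; lra|].
  replace (2 * S m)%nat with (S (S (2*m))) by lia.
  change (rsum (interleave f g) (2*m) + interleave f g (2*m)
          + interleave f g (S (2*m)) = rsum f m + f m + (rsum g m + g m)).
  rewrite IH, interleave_even, interleave_odd. ring.
Qed.

Lemma negligible_union N1 N2 :
  negligible N1 -> negligible N2 -> negligible (fun t => N1 t \/ N2 t).
Proof.
  intros H1 H2 eps He.
  destruct (H1 (eps/2) ltac:(lra)) as (c1 & l1 & Hl1 & Hcov1 & Hsum1).
  destruct (H2 (eps/2) ltac:(lra)) as (c2 & l2 & Hl2 & Hcov2 & Hsum2).
  assert (Hl : forall i, 0 <= interleave l1 l2 i)
    by (intros i; unfold interleave; destruct (Nat.even i); auto).
  exists (interleave c1 c2), (interleave l1 l2). split; [exact Hl|]. split.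
  - intros x [Hx|Hx].
    + destruct (Hcov1 _ Hx) as [i Hi]. exists (2*i)%nat. rewrite !interleave_even. exact Hi.
    + destruct (Hcov2 _ Hx) as [i Hi]. exists (S (2*i)). rewrite !interleave_odd. exact Hi.
  - intros m. apply Rle_trans with (rsum (interleave l1 l2) (2*m)).
    + apply rsum_mono_len; [exact Hl | lia].
    + rewrite rsum_interleave. specialize (Hsum1 m). specialize (Hsum2 m). lra.
Qed.

Lemma scaled_bound s q eps :
  0 <= q -> q < eps / (Rabs s + 1) -> Rabs s * q < eps.
Proof.
  intros Hq H. assert (Hs : 0 <= Rabs s) by apply Rabs_pos.
  apply (Rmult_lt_compat_r (Rabs s + 1)) in H; [|lra].
  unfold Rdiv in H. rewrite Rmult_assoc, Rinv_l in H; nra.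
Qed.

Lemma scaled_tol s eps : 0 < eps -> 0 < eps / (Rabs s + 1).
Proof. intros. apply Rdiv_lt_0_compat; [lra|]. pose proof (Rabs_pos s). lra. Qed.

Lemma deriv_within_reflect a b f x l p :
  deriv_within a b f x l ->
  deriv_within (2*p - b) (2*p - a) (fun t => f (2*p - t)) (2*p - x) (- l).
Proof.
  intros H eps He. destruct (H eps He) as (delta & Hd & Hq). exists delta. split; [exact Hd|].
  intros h Hh Hsmall Hin.
  replace (2*p - (2*p - x + h)) with (x + -h) by ring.
  replace (2*p - (2*p - x)) with x by ring.
  replace ((f (x + -h) - f x)/h - - l) with (- ((f (x + -h) - f x)/ -h - l)) by (field; exact Hh).
  rewrite Rabs_Ropp. apply Hq; [lra | rewrite Rabs_Ropp; exact Hsmall | lra].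
Qed.

Lemma deriv_within_scale a b f x l s :
  deriv_within a b f x l -> deriv_within a b (fun t => s * f t) x (s * l).
Proof.
  intros H eps He. destruct (H _ (scaled_tol s eps He)) as (delta & Hd & Hq).
  exists delta. split; [exact Hd|]. intros h Hh Hsmall Hin.
  replace ((s * f (x + h) - s * f x) / h - s * l)
    with (s * ((f (x+h) - f x)/h - l)) by (field; exact Hh).
  rewrite Rabs_mult. apply scaled_bound; [apply Rabs_pos | auto].
Qed.

Lemma deriv_within_ext a b f g x l :
  (forall t, a <= t <= b -> f t = g t) -> a <= x <= b ->
  deriv_within a b f x l -> deriv_within a b g x l.
Proof.
  intros E Hx H eps He. destruct (H eps He) as (delta & Hd & Hq). exists delta. split; [exact Hd|].
  intros h Hh Hsmall Hin. rewrite <- (E (x+h)), <- (E x) by lra. auto.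
Qed.

Lemma deriv_within_restrict a b a' b' f x l :
  a <= a' -> b' <= b -> deriv_within a b f x l -> deriv_within a' b' f x l.
Proof.
  intros Ha Hb H eps He. destruct (H eps He) as (delta & Hd & Hq). exists delta. split; [exact Hd|].
  intros h Hh Hsmall Hin. apply Hq; auto; lra.
Qed.

Lemma deriv_within_right_end a b c f x l :
  x < b -> deriv_within a b f x l -> deriv_within a c f x l.
Proof.
  intros Hx H eps He. destruct (H eps He) as (delta & Hd & Hq).
  exists (Rmin delta (b - x)). split; [apply Rmin_glb_lt; lra|].
  intros h Hh Hsmall Hin.
  assert (H1 : Rabs h < delta) by (eapply Rlt_le_trans; [exact Hsmall | apply Rmin_l]).
  assert (H2 : Rabs h < b - x) by (eapply Rlt_le_trans; [exact Hsmall | apply Rmin_r]).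
  apply Rabs_def2 in H2. apply Hq; auto; lra.
Qed.

Lemma deriv_within_left_end a b c f x l :
  a < x -> deriv_within a b f x l -> deriv_within c b f x l.
Proof.
  intros Hx H eps He. destruct (H eps He) as (delta & Hd & Hq).
  exists (Rmin delta (x - a)). split; [apply Rmin_glb_lt; lra|].
  intros h Hh Hsmall Hin.
  assert (H1 : Rabs h < delta) by (eapply Rlt_le_trans; [exact Hsmall | apply Rmin_l]).
  assert (H2 : Rabs h < x - a) by (eapply Rlt_le_trans; [exact Hsmall | apply Rmin_r]).
  apply Rabs_def2 in H2. apply Hq; auto; lra.
Qed.

Lemma deriv_within_glue a b c f l :
  deriv_within a b f b l -> deriv_within b c f b l -> deriv_within a c f b l.
Proof.
  intros H1 H2 eps He.
  destruct (H1 eps He) as (d1 & Hd1 & Hq1). destruct (H2 eps He) as (d2 & Hd2 & Hq2).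
  exists (Rmin d1 d2). split; [apply Rmin_glb_lt; lra|].
  intros h Hh Hsmall Hin.
  assert (Rabs h < d1) by (eapply Rlt_le_trans; [exact Hsmall | apply Rmin_l]).
  assert (Rabs h < d2) by (eapply Rlt_le_trans; [exact Hsmall | apply Rmin_r]).
  destruct (Rle_dec h 0); [apply Hq1 | apply Hq2]; auto; lra.
Qed.

Lemma deriv_within_unique a b f x l1 l2 :
  a < b -> a <= x <= b ->
  deriv_within a b f x l1 -> deriv_within a b f x l2 -> l1 = l2.
Proof.
  intros Hab Hx H1 H2. destruct (Req_dec l1 l2) as [|Hne]; [assumption|]. exfalso.
  set (e := Rabs (l1 - l2) / 2).
  assert (He : 0 < e) by (unfold e; pose proof (Rabs_pos_lt (l1 - l2) ltac:(lra)); lra).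
  destruct (H1 e He) as (d1 & Hd1 & Hq1). destruct (H2 e He) as (d2 & Hd2 & Hq2).
  set (m := Rmin (Rmin d1 d2) (b - a)).
  assert (Hm1 : m <= d1) by (unfold m; eapply Rle_trans; [apply Rmin_l | apply Rmin_l]).
  assert (Hm2 : m <= d2) by (unfold m; eapply Rle_trans; [apply Rmin_l | apply Rmin_r]).
  assert (Hm3 : m <= b - a) by apply Rmin_r.
  assert (Hm : 0 < m) by (unfold m; repeat apply Rmin_glb_lt; lra).
  set (h := if Rle_dec (x + m/2) b then m/2 else - (m/2)).
  assert (Hh : h <> 0 /\ Rabs h < m /\ a <= x + h <= b).
  { unfold h; destruct (Rle_dec (x + m/2) b).
    - rewrite Rabs_right by lra. repeat split; lra.
    - rewrite Rabs_left by lra. repeat split; lra. }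
  destruct Hh as (Hh0 & Hhm & Hhin).
  specialize (Hq1 h Hh0 ltac:(lra) Hhin). specialize (Hq2 h Hh0 ltac:(lra) Hhin).
  set (q := (f (x + h) - f x) / h) in *.
  assert (Rabs (l1 - l2) <= Rabs (q - l2) + Rabs (q - l1)).
  { replace (l1 - l2) with ((q - l2) + - (q - l1)) by ring.
    eapply Rle_trans; [apply Rabs_triang | rewrite Rabs_Ropp; lra]. }
  unfold e in *. lra.
Qed.

Lemma abs_cont_ext a b f g :
  (forall t, a <= t <= b -> f t = g t) -> abs_cont a b f -> abs_cont a b g.
Proof.
  intros E H eps He. destruct (H eps He) as (delta & Hd & Hq). exists delta. split; [exact Hd|].
  intros m x y Hin Hord Hlen.
  rewrite <- (rsum_ext (fun i => Rabs (f (y i) - f (x i)))); [apply Hq; auto|].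
  intros i Hi. destruct (Hin i Hi). rewrite !E by lra. reflexivity.
Qed.

Lemma abs_cont_restrict a b a' b' f :
  a <= a' -> b' <= b -> abs_cont a b f -> abs_cont a' b' f.
Proof.
  intros Ha Hb H eps He. destruct (H eps He) as (delta & Hd & Hq). exists delta. split; [exact Hd|].
  intros m x y Hin Hord Hlen. apply Hq; auto. intros i Hi. destruct (Hin i Hi). lra.
Qed.

Lemma abs_cont_scale a b f s : abs_cont a b f -> abs_cont a b (fun t => s * f t).
Proof.
  intros H eps He. destruct (H _ (scaled_tol s eps He)) as (delta & Hd & Hq).
  exists delta. split; [exact Hd|]. intros m x y Hin Hord Hlen.
  rewrite (rsum_ext _ (fun i => Rabs s * Rabs (f (y i) - f (x i)))).
  2:{ intros i _. rewrite <- Rabs_mult. f_equal. ring. }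
  rewrite rsum_scal. apply scaled_bound; [|auto].
  apply rsum_nonneg. intros; apply Rabs_pos.
Qed.

(* Reflecting a partition of [2p-b, 2p-a] (and reversing its order) gives
   a partition of [a,b] with the same lengths and the same variation. *)
Lemma abs_cont_reflect a b f p :
  abs_cont a b f -> abs_cont (2*p - b) (2*p - a) (fun t => f (2*p - t)).
Proof.
  intros H eps He. destruct (H eps He) as (delta & Hd & Hq). exists delta. split; [exact Hd|].
  intros m x y Hin Hord Hlen.
  set (x' := fun i => 2*p - y (m - 1 - i)%nat).
  set (y' := fun i => 2*p - x (m - 1 - i)%nat).
  assert (Hvar : rsum (fun i => Rabs (f (2*p - y i) - f (2*p - x i))) m
               = rsum (fun i => Rabs (f (y' i) - f (x' i))) m).
  { rewrite <- (rsum_rev m (fun i => Rabs (f (y' i) - f (x' i)))).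
    apply rsum_ext. intros i Hi. unfold x', y'.
    replace (m - 1 - (m - 1 - i))%nat with i by lia. apply Rabs_minus_sym. }
  rewrite Hvar. apply Hq.
  - intros i Hi. unfold x', y'. destruct (Hin (m - 1 - i)%nat ltac:(lia)). lra.
  - intros i Hi. unfold x', y'.
    assert (Ho := Hord (m - 1 - S i)%nat ltac:(lia)).
    replace (S (m - 1 - S i)) with (m - 1 - i)%nat in Ho by lia. lra.
  - rewrite <- (rsum_rev m (fun i => y' i - x' i)).
    rewrite (rsum_ext _ (fun i => y i - x i)); [exact Hlen|].
    intros i Hi. unfold x', y'. replace (m - 1 - (m - 1 - i))%nat with i by lia. ring.
Qed.

Lemma increment_split f b x y : x <= y ->
  Rabs (f y - f x) <= Rabs (f (Rmin y b) - f (Rmin x b)) + Rabs (f (Rmax y b) - f (Rmax x b)).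
Proof.
  intros Hxy.
  assert (Hzero : Rabs (f b - f b) = 0) by (replace (f b - f b) with 0 by ring; apply Rabs_R0).
  destruct (Rle_dec y b).
  - rewrite (Rmin_left y), (Rmin_left x), (Rmax_right y), (Rmax_right x) by lra. lra.
  - destruct (Rle_dec b x).
    + rewrite (Rmin_right y), (Rmin_right x), (Rmax_left y), (Rmax_left x) by lra. lra.
    + rewrite (Rmin_right y), (Rmin_left x), (Rmax_left y), (Rmax_right x) by lra.
      replace (f y - f x) with ((f b - f x) + (f y - f b)) by ring. apply Rabs_triang.
Qed.

(* Absolute continuity on [a,b] and on [b,c] gives it on [a,c]: a
   partition of [a,c] is clamped to [a,b] and to [b,c]. *)
Lemma abs_cont_glue a b c f :
  a <= b -> b <= c -> abs_cont a b f -> abs_cont b c f -> abs_cont a c f.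
Proof.
  intros Hab Hbc H1 H2 eps He.
  destruct (H1 (eps/2) ltac:(lra)) as (d1 & Hd1 & Hq1).
  destruct (H2 (eps/2) ltac:(lra)) as (d2 & Hd2 & Hq2).
  exists (Rmin d1 d2). split; [apply Rmin_glb_lt; lra|].
  intros m x y Hin Hord Hlen.
  assert (Hm1 : Rmin d1 d2 <= d1) by apply Rmin_l.
  assert (Hm2 : Rmin d1 d2 <= d2) by apply Rmin_r.
  assert (Hleft : rsum (fun i => Rabs (f (Rmin (y i) b) - f (Rmin (x i) b))) m < eps/2).
  { apply Hq1.
    - intros i Hi. destruct (Hin i Hi). unfold Rmin; repeat destruct Rle_dec; lra.
    - intros i Hi. specialize (Hord i Hi). unfold Rmin; repeat destruct Rle_dec; lra.
    - eapply Rle_lt_trans; [|apply Rlt_le_trans with (1 := Hlen); exact Hm1].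
      apply rsum_le. intros i Hi. destruct (Hin i Hi). unfold Rmin; repeat destruct Rle_dec; lra. }
  assert (Hright : rsum (fun i => Rabs (f (Rmax (y i) b) - f (Rmax (x i) b))) m < eps/2).
  { apply Hq2.
    - intros i Hi. destruct (Hin i Hi). unfold Rmax; repeat destruct Rle_dec; lra.
    - intros i Hi. specialize (Hord i Hi). unfold Rmax; repeat destruct Rle_dec; lra.
    - eapply Rle_lt_trans; [|apply Rlt_le_trans with (1 := Hlen); exact Hm2].
      apply rsum_le. intros i Hi. destruct (Hin i Hi). unfold Rmax; repeat destruct Rle_dec; lra. }
  eapply Rle_lt_trans with (rsum (fun i => Rabs (f (Rmin (y i) b) - f (Rmin (x i) b))
                                        + Rabs (f (Rmax (y i) b) - f (Rmax (x i) b))) m).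
  - apply rsum_le. intros i Hi. apply increment_split. apply Hin; exact Hi.
  - rewrite rsum_plus. lra.
Qed.

(* The mirror image about p with sign s: if d_k = u^(k), then
   s (-1)^k d_k(2p - t) are the derivatives of t |-> s u(2p - t). *)
Definition mirror (p s : R) (d : nat -> R -> R) : nat -> R -> R :=
  fun k t => s * (-1)^k * d k (2*p - t).

Definition glue (p : R) (d e : nat -> R -> R) : nat -> R -> R :=
  fun k t => if Rle_dec t p then d k t else e k t.

Lemma glue_left p d e k t : t <= p -> glue p d e k t = d k t.
Proof. intros H. unfold glue. destruct (Rle_dec t p); [reflexivity | lra]. Qed.

Lemma glue_right p d e k t : p < t -> glue p d e k t = e k t.
Proof. intros H. unfold glue. destruct (Rle_dec t p); [lra | reflexivity]. Qed.

Lemma glue_right_closed p d e k t : p <= t -> d k p = e k p -> glue p d e k t = e k t.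
Proof.
  intros H E. unfold glue. destruct (Rle_dec t p); [|reflexivity].
  replace t with p by lra. exact E.
Qed.

Lemma mirror_at p s d k t : mirror p s d k (2*p - t) = s * (-1)^k * d k t.
Proof. unfold mirror. f_equal. f_equal. ring. Qed.

Lemma mirror_self p s d k : mirror p s d k p = s * (-1)^k * d k p.
Proof. unfold mirror. replace (2*p - p) with p by ring. reflexivity. Qed.

Lemma mirror_at_0 p s d k : mirror p s d k 0 = s * (-1)^k * d k (2*p).
Proof. unfold mirror. replace (2*p - 0) with (2*p) by ring. reflexivity. Qed.

Lemma mirror_at_2p p s d k : mirror p s d k (2*p) = s * (-1)^k * d k 0.
Proof. unfold mirror. replace (2*p - 2*p) with 0 by ring. reflexivity. Qed.

Lemma W2n1_mirror n a b a' b' p s d :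
  a' = 2*p - b -> b' = 2*p - a -> W2n1 n a b d -> W2n1 n a' b' (mirror p s d).
Proof.
  intros -> -> [Hder Hac]. split.
  - intros k Hk x Hx.
    assert (D := Hder k Hk (2*p - x) ltac:(lra)).
    apply (deriv_within_reflect _ _ _ _ _ p) in D.
    replace (2*p - (2*p - x)) with x in D by ring.
    apply (deriv_within_scale _ _ _ _ _ (s * (-1)^k)) in D.
    unfold mirror at 2. replace (s * (-1) ^ S k * d (S k) (2 * p - x))
      with (s * (-1)^k * - d (S k) (2*p - x)) by (simpl; ring).
    exact D.
  - apply (abs_cont_scale _ _ (fun t => d (2*n-1)%nat (2*p - t))).
    apply abs_cont_reflect. exact Hac.
Qed.

Lemma W2n1_glue n a b c d e :
  (1 <= n)%nat -> a <= b <= c -> W2n1 n a b d -> W2n1 n b c e ->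
  (forall k, (k < 2*n)%nat -> d k b = e k b) -> W2n1 n a c (glue b d e).
Proof.
  intros Hn Hb [Dd Ad] [De Ae] Hmatch. split.
  - intros k Hk x Hx.
    assert (HL : a <= x <= b -> deriv_within a b (glue b d e k) x (glue b d e (S k) x)).
    { intros Hx'. rewrite glue_left by lra. apply deriv_within_ext with (d k); auto.
      intros t Ht. rewrite glue_left by lra. reflexivity. }
    assert (HR : b <= x <= c -> deriv_within b c (glue b d e k) x (glue b d e (S k) x)).
    { intros Hx'. rewrite glue_right_closed by (lra || (apply Hmatch; lia)).
      apply deriv_within_ext with (e k); auto.
      intros t Ht. rewrite glue_right_closed by (lra || (apply Hmatch; lia)). reflexivity. }
    destruct (Rtotal_order x b) as [Hl|[Heq|Hr]].
    + apply deriv_within_right_end with b; [exact Hl | apply HL; lra].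
    + subst x. apply deriv_within_glue; [apply HL | apply HR]; lra.
    + apply deriv_within_left_end with b; [exact Hr | apply HR; lra].
  - apply abs_cont_glue with b; try lra.
    + apply abs_cont_ext with (d (2*n-1)%nat); [|exact Ad].
      intros t Ht. rewrite glue_left by lra. reflexivity.
    + apply abs_cont_ext with (e (2*n-1)%nat); [|exact Ae].
      intros t Ht. rewrite glue_right_closed by (lra || (apply Hmatch; lia)). reflexivity.
Qed.

Definition ode_at n a b (C : nat -> R -> R) lam (d : nat -> R -> R) t : Prop :=
  exists v, deriv_within a b (d (2*n-1)%nat) t v /\
    v + rsum (fun k => C k t * d k t) (2*n) + lam * d O t = 0.

Definition solution n b C lam d : Prop := W2n1 n 0 b d /\ ae_on 0 b (ode_at n 0 b C lam d).

Definition coef_sym p (C : nat -> R -> R) : Prop :=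
  forall k x, x <> p -> C k x = (-1)^k * C k (2*p - x).

Lemma refl_coef_left p c k t : t <= p -> refl_coef p c k t = c k t.
Proof. intros H. unfold refl_coef. destruct (Rle_dec t p); [reflexivity | lra]. Qed.

Lemma refl_coef_sym p c : coef_sym p (refl_coef p c).
Proof.
  intros k x Hx. unfold refl_coef. rewrite sign_parity.
  destruct (Rle_dec x p); destruct (Rle_dec (2*p - x) p); try lra.
  - replace (2*p - (2*p - x)) with x by ring. destruct (Nat.even k); ring.
  - destruct (Nat.even k); ring.
Qed.

Lemma ode_at_transfer n a b a' b' C C' lam d d' t :
  (1 <= n)%nat -> ode_at n a b C lam d t ->
  (forall k, (k < 2*n)%nat -> C' k t = C k t) ->
  (forall k, (k < 2*n)%nat -> d' k t = d k t) ->
  (forall v, deriv_within a b (d (2*n-1)%nat) t v -> deriv_within a' b' (d' (2*n-1)%nat) t v) ->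
  ode_at n a' b' C' lam d' t.
Proof.
  intros Hn (v & Hv & E) HC Hd Hder. exists v. split; [auto|].
  rewrite (rsum_ext _ (fun k => C k t * d k t)).
  - replace (d' O t) with (d O t) by (symmetry; apply Hd; lia). exact E.
  - intros k Hk. rewrite HC, Hd by exact Hk. reflexivity.
Qed.

(* For mirror-symmetric coefficients the mirror image of a solution of
   the equation at t solves it at 2p - t (every term picks up the factor s). *)
Lemma ode_at_mirror n a b C lam d t p s :
  (1 <= n)%nat -> coef_sym p C -> t <> p -> ode_at n a b C lam d t ->
  ode_at n (2*p - b) (2*p - a) C lam (mirror p s d) (2*p - t).
Proof.
  intros Hn HC Ht (v & Hv & E). exists (s * v). split.
  - apply (deriv_within_reflect _ _ _ _ _ p) in Hv.
    apply (deriv_within_scale _ _ _ _ _ (s * (-1)^(2*n-1))) in Hv.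
    replace (s * v) with (s * (-1)^(2*n-1) * - v) by (rewrite sign_top by exact Hn; ring).
    exact Hv.
  - rewrite mirror_at.
    rewrite (rsum_ext _ (fun k => s * (C k t * d k t))).
    + rewrite rsum_scal.
      replace (s * v + s * rsum (fun k => C k t * d k t) (2 * n) + lam * (s * (-1)^0 * d O t))
        with (s * (v + rsum (fun k => C k t * d k t) (2 * n) + lam * d O t)) by (simpl; ring).
      rewrite E. ring.
    + intros k Hk. rewrite mirror_at, (HC k (2*p - t)) by lra.
      replace (2*p - (2*p - t)) with t by ring.
      replace ((-1) ^ k * C k t * (s * (-1) ^ k * d k t))
        with (((-1)^k * (-1)^k) * (s * (C k t * d k t))) by ring.
      rewrite sign_sq. ring.
Qed.

Lemma solution_mirror n p C lam d s :
  (1 <= n)%nat -> coef_sym p C -> solution n (2*p) C lam d -> solution n (2*p) C lam (mirror p s d).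
Proof.
  intros Hn HC [HW (N & HN & Hode)]. split.
  - apply (W2n1_mirror _ 0 (2*p)); [ring | ring | exact HW].
  - exists (fun t => N (2*p - t) \/ t = p). split.
    + apply negligible_union; [apply negligible_reflect; exact HN | apply negligible_point].
    + intros t Ht HNt.
      assert (Q := Hode (2*p - t) ltac:(lra) ltac:(tauto)).
      apply (ode_at_mirror _ _ _ _ _ _ _ p s) in Q; [|exact Hn | exact HC | lra].
      replace (2*p - (2*p - t)) with t in Q by ring.
      replace (2*p - 2*p) with 0 in Q by ring. replace (2*p - 0) with (2*p) in Q by ring.
      exact Q.
Qed.

(* d agrees at x with its mirror image about x with sign s; for s = 1
   (resp. -1) this says that the odd (resp. even) derivatives vanish at x. *)
Definition mirror_compatible n s (d : nat -> R -> R) x : Prop :=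
  forall k, (k < 2*n)%nat -> d k x = s * (-1)^k * d k x.

Lemma ode_at_glue_left n p c lam d e t :
  (1 <= n)%nat -> 0 <= t < p -> ode_at n 0 p c lam d t ->
  ode_at n 0 (2*p) (refl_coef p c) lam (glue p d e) t.
Proof.
  intros Hn Ht Q. apply (ode_at_transfer _ _ _ _ _ _ _ _ _ _ _ Hn Q).
  - intros k _. apply refl_coef_left. lra.
  - intros k _. apply glue_left. lra.
  - intros v Hv. apply deriv_within_right_end with p; [lra|].
    apply deriv_within_ext with (d (2*n-1)%nat); [|lra|exact Hv].
    intros x Hx. rewrite glue_left by lra. reflexivity.
Qed.

Lemma ode_at_glue_right n p c lam d s t :
  (1 <= n)%nat -> p < t <= 2*p -> mirror_compatible n s d p ->
  ode_at n 0 p c lam d (2*p - t) ->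
  ode_at n 0 (2*p) (refl_coef p c) lam (glue p d (mirror p s d)) t.
Proof.
  intros Hn Ht Hc Q.
  assert (Q' : ode_at n 0 p (refl_coef p c) lam d (2*p - t)).
  { apply (ode_at_transfer _ _ _ _ _ _ _ _ _ _ _ Hn Q); auto.
    intros k _. apply refl_coef_left. lra. }
  apply (ode_at_mirror _ _ _ _ _ _ _ p s) in Q'; [|exact Hn | apply refl_coef_sym | lra].
  replace (2*p - (2*p - t)) with t in Q' by ring.
  replace (2*p - p) with p in Q' by ring. replace (2*p - 0) with (2*p) in Q' by ring.
  apply (ode_at_transfer _ _ _ _ _ _ _ _ _ _ _ Hn Q'); auto.
  - intros k _. apply glue_right. lra.
  - intros v Hv. apply deriv_within_left_end with p; [lra|].
    apply deriv_within_ext with (mirror p s d (2*n-1)%nat); [|lra|exact Hv].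
    intros x Hx. rewrite glue_right_closed; [reflexivity | lra|].
    rewrite mirror_self. apply Hc. lia.
Qed.

Lemma solution_extend n p c lam d s :
  (1 <= n)%nat -> 0 < p -> solution n p c lam d -> mirror_compatible n s d p ->
  solution n (2*p) (refl_coef p c) lam (glue p d (mirror p s d)).
Proof.
  intros Hn Hp [HW (N & HN & Hode)] Hc. split.
  - apply (W2n1_glue _ _ p); [exact Hn | lra | exact HW | |].
    + apply (W2n1_mirror _ 0 p); [ring | ring | exact HW].
    + intros k Hk. rewrite mirror_self. apply Hc, Hk.
  - exists (fun t => N t \/ N (2*p - t) \/ t = p). split.
    + apply negligible_union; [exact HN|].
      apply negligible_union; [apply negligible_reflect; exact HN | apply negligible_point].
    + intros t Ht HNt. destruct (Rtotal_order t p) as [Hl|[Heq|Hr]]; [| tauto |].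
      * apply ode_at_glue_left; [exact Hn | lra|]. apply Hode; [lra | tauto].
      * apply ode_at_glue_right; [exact Hn | lra | exact Hc|]. apply Hode; [lra | tauto].
Qed.

Lemma solution_restrict n p c lam d :
  0 < p -> solution n (2*p) (refl_coef p c) lam d -> solution n p c lam d.
Proof.
  intros Hp [[Hder Hac] (N & HN & Hode)]. split; [split|].
  - intros k Hk x Hx. apply (deriv_within_restrict 0 (2*p)); try lra. apply Hder; [exact Hk | lra].
  - apply (abs_cont_restrict 0 (2*p)); [lra | lra | exact Hac].
  - exists N. split; [exact HN|]. intros t Ht HNt.
    destruct (Hode t ltac:(lra) HNt) as (v & Hv & E). exists v. split.
    + apply (deriv_within_restrict 0 (2*p)); [lra | lra | exact Hv].
    + rewrite <- E. f_equal. f_equal. apply rsum_ext. intros k _.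
      rewrite refl_coef_left by lra. reflexivity.
Qed.

Definition nontrivial b (d : nat -> R -> R) : Prop := exists t, 0 <= t <= b /\ d O t <> 0.

Lemma eigfun_solution n b C bc lam u : eigfun n b C bc lam u ->
  exists d, (forall t, 0 <= t <= b -> d O t = u t) /\
    solution n b C lam d /\ bc d /\ nontrivial b d.
Proof.
  intros (d & Hu & HW & Hbc & (t & Ht & Hnz) & (N & HN & Hode)).
  exists d. split; [exact Hu|]. split; [split; [exact HW|]|split; [exact Hbc|]].
  - exists N. split; [exact HN|]. intros s Hs HNs. destruct (Hode s Hs HNs) as (v & Hv & E).
    exists v. split; [exact Hv|]. rewrite Hu; assumption.
  - exists t. rewrite Hu; auto.
Qed.

Lemma solution_eigfun n b C bc lam d :
  solution n b C lam d -> bc d -> nontrivial b d -> eigfun n b C bc lam (d O).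
Proof.
  intros [HW (N & HN & Hode)] Hbc Hnz. exists d.
  split; [reflexivity|]. split; [exact HW|]. split; [exact Hbc|]. split; [exact Hnz|].
  exists N. split; assumption.
Qed.

Lemma first_eig_le n b C bc lam lam' d :
  first_eig n b C bc lam -> solution n b C lam' d -> bc d -> nontrivial b d -> lam <= lam'.
Proof.
  intros (_ & Hmin & _) HS Hbc Hnz. apply Hmin. exists (d O). apply solution_eigfun; assumption.
Qed.

(* A first eigenfunction, being a multiple of a function of constant sign,
   cannot be odd about the midpoint of [0,b]. *)
Lemma first_eig_not_odd n b C bc lam w :
  first_eig n b C bc lam -> eigfun n b C bc lam w ->
  (forall t, 0 <= t <= b -> w (b - t) = - w t) -> False.
Proof.
  intros (_ & _ & u0 & _ & Hsign & Hsimple) Hw Hodd.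
  destruct (Hsimple w Hw) as [al Hal].
  destruct Hw as (d & _ & _ & _ & (t1 & Ht1 & Hnz) & _).
  assert (E1 := Hal t1 Ht1). assert (E2 := Hal (b - t1) ltac:(lra)).
  rewrite Hodd in E2 by exact Ht1.
  assert (Hprod : 0 <= u0 t1 * u0 (b - t1)).
  { destruct Hsign as [Hs|Hs].
    - apply Rmult_le_pos; apply Hs; lra.
    - assert (u0 t1 <= 0) by (apply Hs; lra). assert (u0 (b - t1) <= 0) by (apply Hs; lra). nra. }
  (* w(t1)^2 = - al^2 u0(t1) u0(b - t1) <= 0 *)
  assert (Hsq : w t1 * w t1 = - (al * al) * (u0 t1 * u0 (b - t1))).
  { rewrite E1 at 1. replace (w t1) with (- (al * u0 (b - t1))) by lra. ring. }
  assert (0 <= al * al) by nra.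
  assert (w t1 * w t1 <= 0) by nra.
  apply Hnz. nra.
Qed.

Lemma family_determined n a b d e :
  a < b -> W2n1 n a b d -> W2n1 n a b e -> (forall t, a <= t <= b -> d O t = e O t) ->
  forall k, (k < 2*n)%nat -> forall t, a <= t <= b -> d k t = e k t.
Proof.
  intros Hab [Dd _] [De _] H0. induction k as [|k IH]; intros Hk t Ht; [exact (H0 t Ht)|].
  assert (D1 := Dd k ltac:(lia) t Ht). assert (D2 := De k ltac:(lia) t Ht).
  apply (deriv_within_ext _ _ (e k) (d k)) in D2;
    [| intros s Hs; symmetry; apply IH; [lia | exact Hs] | exact Ht].
  exact (deriv_within_unique a b (d k) t _ _ Hab Ht D1 D2).
Qed.

(* For mirror-symmetric coefficients and boundary conditions invariant under
   mirroring, the first eigenfunction on [0,2p] is even about p: its mirror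
   image is a multiple al u0 with al^2 = 1, and al = -1 would make u0 odd. *)
Lemma first_eigfun_even n p C bc lam :
  (1 <= n)%nat -> coef_sym p C -> (forall d, bc d -> bc (mirror p 1 d)) ->
  first_eig n (2*p) C bc lam ->
  exists d, solution n (2*p) C lam d /\ bc d /\ nontrivial (2*p) d /\
    forall t, 0 <= t <= 2*p -> d O (2*p - t) = d O t.
Proof.
  intros Hn HC Hbc_mirror Hfirst.
  pose proof Hfirst as (_ & _ & u0 & Hu0 & _ & Hsimple).
  destruct (eigfun_solution _ _ _ _ _ _ Hu0) as (d & Hdu & HS & Hbc & (t0 & Ht0 & Hnz)).
  assert (HSm : solution n (2*p) C lam (mirror p 1 d)) by (apply solution_mirror; assumption).
  assert (Hnzm : nontrivial (2*p) (mirror p 1 d)).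
  { exists (2*p - t0). split; [lra|]. rewrite mirror_at. simpl. lra. }
  destruct (Hsimple _ (solution_eigfun _ _ _ _ _ _ HSm (Hbc_mirror _ Hbc) Hnzm)) as [al Hal].
  assert (Hratio : forall t, 0 <= t <= 2*p -> d O (2*p - t) = al * d O t).
  { intros t Ht. rewrite (Hdu t Ht), <- (Hal t Ht).
    unfold mirror. simpl. ring. }
  assert (Hal2 : al * al = 1).
  { assert (A1 := Hratio t0 Ht0). assert (A2 := Hratio (2*p - t0) ltac:(lra)).
    replace (2*p - (2*p - t0)) with t0 in A2 by ring. rewrite A1 in A2.
    apply (Rmult_eq_reg_r (d O t0)); [lra | exact Hnz]. }
  exists d. split; [exact HS|]. split; [exact Hbc|]. split; [exists t0; auto|].
  destruct (Req_dec al 1) as [->|Hne]; [intros t Ht; rewrite Hratio; [ring | exact Ht]|].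
  assert (Hm1 : al = -1) by nra. subst al. exfalso.
  assert (Hu : eigfun n (2*p) C bc lam (d O))
    by (apply solution_eigfun; [exact HS | exact Hbc | exists t0; auto]).
  apply (first_eig_not_odd _ _ _ _ _ _ Hfirst Hu).
  intros t Ht. rewrite Hratio by exact Ht. ring.
Qed.

Definition even_about n p (d : nat -> R -> R) : Prop :=
  forall k t, (k < 2*n)%nat -> 0 <= t <= 2*p -> d k t = (-1)^k * d k (2*p - t).

Lemma first_eigfun_symmetric n p C bc lam :
  (1 <= n)%nat -> 0 < p -> coef_sym p C -> (forall d, bc d -> bc (mirror p 1 d)) ->
  first_eig n (2*p) C bc lam ->
  exists d, solution n (2*p) C lam d /\ bc d /\ nontrivial (2*p) d /\ even_about n p d.
Proof.
  intros Hn Hp HC Hbc_mirror Hfirst.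
  destruct (first_eigfun_even _ _ _ _ _ Hn HC Hbc_mirror Hfirst) as (d & HS & Hbc & Hnz & Heven).
  exists d. split; [exact HS|]. split; [exact Hbc|]. split; [exact Hnz|].
  intros k t Hk Ht.
  assert (HWm : W2n1 n 0 (2*p) (mirror p 1 d)) by (apply (solution_mirror _ _ _ _ _ 1 Hn HC HS)).
  rewrite (family_determined n 0 (2*p) d (mirror p 1 d));
    [unfold mirror; ring | lra | apply HS | exact HWm | | exact Hk | exact Ht].
  intros s Hs. unfold mirror. simpl. rewrite Heven by exact Hs. ring.
Qed.

Definition vanish_odd n (d : nat -> R -> R) x : Prop :=
  forall j, (j < n)%nat -> d (2*j+1)%nat x = 0.
Definition vanish_even n (d : nat -> R -> R) x : Prop :=
  forall j, (j < n)%nat -> d (2*j)%nat x = 0.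

Lemma bc_N_iff n b d : bc_N n b d <-> vanish_odd n d 0 /\ vanish_odd n d b.
Proof. split; [intros H; split; intros j Hj; apply H, Hj | intros [H0 Hb] j Hj; auto]. Qed.
Lemma bc_D_iff n b d : bc_D n b d <-> vanish_even n d 0 /\ vanish_even n d b.
Proof. split; [intros H; split; intros j Hj; apply H, Hj | intros [H0 Hb] j Hj; auto]. Qed.
Lemma bc_M1_iff n b d : bc_M1 n b d <-> vanish_odd n d 0 /\ vanish_even n d b.
Proof. split; [intros H; split; intros j Hj; apply H, Hj | intros [H0 Hb] j Hj; auto]. Qed.
Lemma bc_M2_iff n b d : bc_M2 n b d <-> vanish_even n d 0 /\ vanish_odd n d b.
Proof. split; [intros H; split; intros j Hj; apply H, Hj | intros [H0 Hb] j Hj; auto]. Qed.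

Lemma vanish_odd_compatible n d x : vanish_odd n d x -> mirror_compatible n 1 d x.
Proof.
  intros H k Hk. destruct (parity_split n k Hk) as [(j & _ & ->)|(j & Hj & ->)].
  - rewrite sign_even. ring.
  - rewrite H by exact Hj. ring.
Qed.

Lemma vanish_even_compatible n d x : vanish_even n d x -> mirror_compatible n (-1) d x.
Proof.
  intros H k Hk. destruct (parity_split n k Hk) as [(j & Hj & ->)|(j & _ & ->)].
  - rewrite H by exact Hj. ring.
  - rewrite sign_odd. ring.
Qed.

Lemma glue_at_0 p d e k : 0 < p -> glue p d e k 0 = d k 0.
Proof. intros. apply glue_left. lra. Qed.

Lemma glue_at_2p p s d k : 0 < p -> glue p d (mirror p s d) k (2*p) = s * (-1)^k * d k 0.
Proof.
  intros. rewrite glue_right by lra. apply mirror_at_2p.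
Qed.

Lemma glue_bc_P n p s d : 0 < p -> mirror_compatible n s d 0 ->
  bc_P n (2*p) (glue p d (mirror p s d)).
Proof. intros Hp H k Hk. rewrite glue_at_0, glue_at_2p by exact Hp. apply H, Hk. Qed.

Lemma glue_bc_A n p s d : 0 < p -> mirror_compatible n (-s) d 0 ->
  bc_A n (2*p) (glue p d (mirror p s d)).
Proof.
  intros Hp H k Hk. rewrite glue_at_0, glue_at_2p by exact Hp.
  rewrite (H k Hk) at 1. ring.
Qed.

Lemma glue_bc_N n p s d : 0 < p -> vanish_odd n d 0 -> bc_N n (2*p) (glue p d (mirror p s d)).
Proof.
  intros Hp H. apply bc_N_iff. split; intros j Hj;
    rewrite ?glue_at_0, ?glue_at_2p, H by assumption; ring.
Qed.

Lemma glue_bc_D n p s d : 0 < p -> vanish_even n d 0 -> bc_D n (2*p) (glue p d (mirror p s d)).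
Proof.
  intros Hp H. apply bc_D_iff. split; intros j Hj;
    rewrite ?glue_at_0, ?glue_at_2p, H by assumption; ring.
Qed.

Lemma mirror_bc_P n p s d : bc_P n (2*p) d -> bc_P n (2*p) (mirror p s d).
Proof. intros H k Hk. rewrite mirror_at_0, mirror_at_2p, (H k Hk). reflexivity. Qed.

Lemma mirror_bc_A n p s d : bc_A n (2*p) d -> bc_A n (2*p) (mirror p s d).
Proof. intros H k Hk. rewrite mirror_at_0, mirror_at_2p, (H k Hk). ring. Qed.

Lemma mirror_bc_N n p s d : bc_N n (2*p) d -> bc_N n (2*p) (mirror p s d).
Proof.
  intros H j Hj. rewrite mirror_at_0, mirror_at_2p.
  destruct (H j Hj) as [-> ->]. split; ring.
Qed.

Lemma mirror_bc_D n p s d : bc_D n (2*p) d -> bc_D n (2*p) (mirror p s d).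
Proof.
  intros H j Hj. rewrite mirror_at_0, mirror_at_2p.
  destruct (H j Hj) as [-> ->]. split; ring.
Qed.

Lemma even_about_mid n p d : 0 < p -> even_about n p d -> vanish_odd n d p.
Proof.
  intros Hp H j Hj. assert (E := H (2*j+1)%nat p ltac:(lia) ltac:(lra)).
  rewrite sign_odd in E. replace (2*p - p) with p in E by ring. lra.
Qed.

Lemma even_about_bc_P n p d : 0 < p -> even_about n p d -> bc_P n (2*p) d -> vanish_odd n d 0.
Proof.
  intros Hp H HP j Hj. assert (E := H (2*j+1)%nat 0 ltac:(lia) ltac:(lra)).
  rewrite sign_odd, Rminus_0_r, <- (HP (2*j+1)%nat ltac:(lia)) in E. lra.
Qed.

Lemma even_about_bc_A n p d : 0 < p -> even_about n p d -> bc_A n (2*p) d -> vanish_even n d 0.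
Proof.
  intros Hp H HA j Hj. assert (E := H (2*j)%nat 0 ltac:(lia) ltac:(lra)).
  assert (A := HA (2*j)%nat ltac:(lia)).
  rewrite sign_even, Rminus_0_r in E. lra.
Qed.

Lemma first_eig_glued n p c bcY bc2 lY s :
  (1 <= n)%nat -> 0 < p -> first_eig n p c bcY lY ->
  (forall d, bcY d -> mirror_compatible n s d p) ->
  (forall d, bcY d -> bc2 (glue p d (mirror p s d))) ->
  exists d, solution n (2*p) (refl_coef p c) lY (glue p d (mirror p s d)) /\
    bc2 (glue p d (mirror p s d)) /\ nontrivial (2*p) (glue p d (mirror p s d)) /\
    mirror_compatible n s d p.
Proof.
  intros Hn Hp ((u & Hu) & _) Hcompat Hbc2.
  destruct (eigfun_solution _ _ _ _ _ _ Hu) as (d & _ & HS & Hbc & (t & Ht & Hnz)).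
  exists d. split; [apply solution_extend; auto|]. split; [auto|]. split; [|auto].
  exists t. split; [lra|]. rewrite glue_left by lra. exact Hnz.
Qed.

Lemma extension_le n p c bcY bc2 lY l2 s :
  (1 <= n)%nat -> 0 < p -> first_eig n p c bcY lY ->
  first_eig n (2*p) (refl_coef p c) bc2 l2 ->
  (forall d, bcY d -> mirror_compatible n s d p) ->
  (forall d, bcY d -> bc2 (glue p d (mirror p s d))) -> l2 <= lY.
Proof.
  intros Hn Hp HY H2 Hcompat Hbc2.
  destruct (first_eig_glued _ _ _ _ _ _ _ Hn Hp HY Hcompat Hbc2) as (d & HS & Hbc & Hnz & _).
  exact (first_eig_le _ _ _ _ _ _ _ H2 HS Hbc Hnz).
Qed.

Lemma glue_odd n p d t : (1 <= n)%nat -> mirror_compatible n (-1) d p -> 0 <= t <= 2*p ->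
  glue p d (mirror p (-1) d) O (2*p - t) = - glue p d (mirror p (-1) d) O t.
Proof.
  intros Hn Hc Ht. assert (Hmid : d O p = 0) by (assert (E := Hc O ltac:(lia)); simpl in E; lra).
  unfold glue, mirror. simpl pow.
  destruct (Rle_dec t p); destruct (Rle_dec (2*p - t) p).
  - replace t with p by lra. replace (2*p - p) with p by ring. rewrite Hmid. ring.
  - replace (2*p - (2*p - t)) with t by ring. ring.
  - ring.
  - lra.
Qed.

(* When the glued eigenfunction is odd about p it is not a first
   eigenfunction, so the inequality is strict. *)
Lemma odd_extension_lt n p c bcY bc2 lY l2 :
  (1 <= n)%nat -> 0 < p -> first_eig n p c bcY lY ->
  first_eig n (2*p) (refl_coef p c) bc2 l2 ->
  (forall d, bcY d -> mirror_compatible n (-1) d p) ->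
  (forall d, bcY d -> bc2 (glue p d (mirror p (-1) d))) -> l2 < lY.
Proof.
  intros Hn Hp HY H2 Hcompat Hbc2.
  destruct (first_eig_glued _ _ _ _ _ _ _ Hn Hp HY Hcompat Hbc2) as (d & HS & Hbc & Hnz & Hc).
  destruct (first_eig_le _ _ _ _ _ _ _ H2 HS Hbc Hnz) as [Hlt|Heq]; [exact Hlt|]. subst lY.
  exfalso. apply (first_eig_not_odd _ _ _ _ _ _ H2 (solution_eigfun _ _ _ _ _ _ HS Hbc Hnz)).
  intros t Ht. apply (glue_odd n); assumption.
Qed.

(* The first eigenfunction on [0,2p] is even about p and restricts to an
   eigenfunction on [0,p]. *)
Lemma restriction_le n p c bcY bc2 lY l2 :
  (1 <= n)%nat -> 0 < p -> (forall d, bc2 d -> bc2 (mirror p 1 d)) ->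
  first_eig n (2*p) (refl_coef p c) bc2 l2 ->
  (forall d, bc2 d -> even_about n p d -> bcY d) ->
  first_eig n p c bcY lY -> lY <= l2.
Proof.
  intros Hn Hp Hmirror H2 Hrestr HY.
  destruct (first_eigfun_symmetric _ _ _ _ _ Hn Hp (refl_coef_sym p c) Hmirror H2)
    as (d & HS & Hbc & (t & Ht & Hnz) & Heven).
  apply (first_eig_le _ _ _ _ _ _ d HY); [exact (solution_restrict _ _ _ _ _ Hp HS) | auto |].
  destruct (Rle_dec t p); [exists t; split; [lra | exact Hnz]|].
  exists (2*p - t). split; [lra|]. rewrite Heven in Hnz by (lia || lra). simpl in Hnz. lra.
Qed.

(* Neumann on [0,p] versus periodic on [0,2p]: even extension and restriction. *)
Lemma first_N_eq_P n p c lN lP : (1 <= n)%nat -> 0 < p ->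
  first_eig n p c (bc_N n p) lN ->
  first_eig n (2*p) (refl_coef p c) (bc_P n (2*p)) lP -> lN = lP.
Proof.
  intros Hn Hp HN HP. apply Rle_antisym.
  - apply (restriction_le n p c (bc_N n p) (bc_P n (2*p)) lN lP Hn Hp (mirror_bc_P n p 1) HP);
      [|exact HN].
    intros d Hbc Hev. apply bc_N_iff.
    split; [apply (even_about_bc_P n p) | apply even_about_mid]; assumption.
  - apply (extension_le n p c _ _ _ _ 1 Hn Hp HN HP).
    + intros d [_ Hp']%bc_N_iff. apply vanish_odd_compatible, Hp'.
    + intros d [H0 _]%bc_N_iff. apply glue_bc_P, vanish_odd_compatible; assumption.
Qed.

(* Dirichlet functions extend oddly to periodic ones. *)
Lemma first_P_lt_D n p c lP lD : (1 <= n)%nat -> 0 < p ->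
  first_eig n (2*p) (refl_coef p c) (bc_P n (2*p)) lP ->
  first_eig n p c (bc_D n p) lD -> lP < lD.
Proof.
  intros Hn Hp HP HD. apply (odd_extension_lt n p c _ _ _ _ Hn Hp HD HP).
  - intros d [_ Hp']%bc_D_iff. apply vanish_even_compatible, Hp'.
  - intros d [H0 _]%bc_D_iff. apply glue_bc_P, vanish_even_compatible; assumption.
Qed.

Lemma first_N_eq_N2 n p c lN lN2 : (1 <= n)%nat -> 0 < p ->
  first_eig n p c (bc_N n p) lN ->
  first_eig n (2*p) (refl_coef p c) (bc_N n (2*p)) lN2 -> lN = lN2.
Proof.
  intros Hn Hp HN HN2. apply Rle_antisym.
  - apply (restriction_le n p c (bc_N n p) (bc_N n (2*p)) lN lN2 Hn Hp (mirror_bc_N n p 1) HN2);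
      [|exact HN].
    intros d [H0 _]%bc_N_iff Hev. apply bc_N_iff.
    split; [exact H0 | apply even_about_mid; assumption].
  - apply (extension_le n p c _ _ _ _ 1 Hn Hp HN HN2).
    + intros d [_ Hp']%bc_N_iff. apply vanish_odd_compatible, Hp'.
    + intros d [H0 _]%bc_N_iff. apply glue_bc_N; assumption.
Qed.

(* Mixed (u^(odd)(0) = u^(even)(p) = 0) functions extend oddly to Neumann ones. *)
Lemma first_N2_lt_M1 n p c lN2 lM1 : (1 <= n)%nat -> 0 < p ->
  first_eig n (2*p) (refl_coef p c) (bc_N n (2*p)) lN2 ->
  first_eig n p c (bc_M1 n p) lM1 -> lN2 < lM1.
Proof.
  intros Hn Hp HN2 HM1. apply (odd_extension_lt n p c _ _ _ _ Hn Hp HM1 HN2).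
  - intros d [_ Hp']%bc_M1_iff. apply vanish_even_compatible, Hp'.
  - intros d [H0 _]%bc_M1_iff. apply glue_bc_N; assumption.
Qed.

Lemma first_M2_eq_D2 n p c lM2 lD2 : (1 <= n)%nat -> 0 < p ->
  first_eig n p c (bc_M2 n p) lM2 ->
  first_eig n (2*p) (refl_coef p c) (bc_D n (2*p)) lD2 -> lM2 = lD2.
Proof.
  intros Hn Hp HM2 HD2. apply Rle_antisym.
  - apply (restriction_le n p c (bc_M2 n p) (bc_D n (2*p)) lM2 lD2 Hn Hp (mirror_bc_D n p 1) HD2);
      [|exact HM2].
    intros d [H0 _]%bc_D_iff Hev. apply bc_M2_iff.
    split; [exact H0 | apply even_about_mid; assumption].
  - apply (extension_le n p c _ _ _ _ 1 Hn Hp HM2 HD2).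
    + intros d [_ Hp']%bc_M2_iff. apply vanish_odd_compatible, Hp'.
    + intros d [H0 _]%bc_M2_iff. apply glue_bc_D; assumption.
Qed.

(* Dirichlet functions extend oddly to Dirichlet ones. *)
Lemma first_D2_lt_D n p c lD2 lD : (1 <= n)%nat -> 0 < p ->
  first_eig n (2*p) (refl_coef p c) (bc_D n (2*p)) lD2 ->
  first_eig n p c (bc_D n p) lD -> lD2 < lD.
Proof.
  intros Hn Hp HD2 HD. apply (odd_extension_lt n p c _ _ _ _ Hn Hp HD HD2).
  - intros d [_ Hp']%bc_D_iff. apply vanish_even_compatible, Hp'.
  - intros d [H0 _]%bc_D_iff. apply glue_bc_D; assumption.
Qed.

(* Mixed functions of the first kind extend oddly to antiperiodic ones. *)
Lemma first_A_le_M1 n p c lA lM1 : (1 <= n)%nat -> 0 < p ->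
  first_eig n (2*p) (refl_coef p c) (bc_A n (2*p)) lA ->
  first_eig n p c (bc_M1 n p) lM1 -> lA <= lM1.
Proof.
  intros Hn Hp HA HM1. apply (extension_le n p c _ _ _ _ (-1) Hn Hp HM1 HA).
  - intros d [_ Hp']%bc_M1_iff. apply vanish_even_compatible, Hp'.
  - intros d [H0 _]%bc_M1_iff. apply glue_bc_A; [exact Hp|].
    replace (- -1) with 1 by ring. apply vanish_odd_compatible, H0.
Qed.

Lemma first_A_eq_M2 n p c lA lM2 : (1 <= n)%nat -> 0 < p ->
  first_eig n (2*p) (refl_coef p c) (bc_A n (2*p)) lA ->
  first_eig n p c (bc_M2 n p) lM2 -> lA = lM2.
Proof.
  intros Hn Hp HA HM2. apply Rle_antisym.
  - apply (extension_le n p c _ _ _ _ 1 Hn Hp HM2 HA).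
    + intros d [_ Hp']%bc_M2_iff. apply vanish_odd_compatible, Hp'.
    + intros d [H0 _]%bc_M2_iff. apply glue_bc_A, vanish_even_compatible; assumption.
  - apply (restriction_le n p c (bc_M2 n p) (bc_A n (2*p)) lM2 lA Hn Hp (mirror_bc_A n p 1) HA);
      [|exact HM2].
    intros d Hbc Hev. apply bc_M2_iff.
    split; [apply (even_about_bc_A n p) | apply even_about_mid]; assumption.
Qed.

Theorem theorem4p2 (n : nat) (T : R) (a : nat -> R -> R)
  (lN lD lM1 lM2 lP2 lA2 lN2 lD2 lP4 : R) :
  (1 <= n)%nat -> 0 < T ->
  (forall k, (k < 2 * n)%nat -> L1 0 T (a k)) ->
  first_eig n T a (bc_N n T) lN ->
  first_eig n T a (bc_D n T) lD ->
  first_eig n T a (bc_M1 n T) lM1 ->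
  first_eig n T a (bc_M2 n T) lM2 ->
  first_eig n (2 * T) (refl_coef T a) (bc_P n (2 * T)) lP2 ->
  first_eig n (2 * T) (refl_coef T a) (bc_A n (2 * T)) lA2 ->
  first_eig n (2 * T) (refl_coef T a) (bc_N n (2 * T)) lN2 ->
  first_eig n (2 * T) (refl_coef T a) (bc_D n (2 * T)) lD2 ->
  first_eig n (4 * T) (refl_coef (2 * T) (refl_coef T a)) (bc_P n (4 * T)) lP4 ->
  (lN = lP2 /\ lP2 < lD) /\
  (lN = lN2 /\ lN2 < lM1) /\
  lN = lP4 /\
  (lM2 = lD2 /\ lD2 < lD) /\
  lN < lM2 /\
  lA2 = Rmin lM1 lM2.
Proof.
  intros Hn HT _ HN HD HM1 HM2 HP2 HA2 HN2 HD2 HP4.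
  (* [0,4T] is the reflection of [0,2T] about 2T *)
  replace (4 * T) with (2 * (2 * T)) in HP4 by ring.
  assert (HT2 : 0 < 2 * T) by lra.
  assert (E_NP := first_N_eq_P n T a lN lP2 Hn HT HN HP2).
  assert (E_PD := first_P_lt_D n T a lP2 lD Hn HT HP2 HD).
  assert (E_NN := first_N_eq_N2 n T a lN lN2 Hn HT HN HN2).
  assert (E_NM := first_N2_lt_M1 n T a lN2 lM1 Hn HT HN2 HM1).
  assert (E_N2P4 := first_N_eq_P n (2*T) (refl_coef T a) lN2 lP4 Hn HT2 HN2 HP4).
  (* item 5 follows from lN = lN2 = lP4 < lD2 = lM2 *)
  assert (E_P4D2 := first_P_lt_D n (2*T) (refl_coef T a) lP4 lD2 Hn HT2 HP4 HD2).
  assert (E_MD := first_M2_eq_D2 n T a lM2 lD2 Hn HT HM2 HD2).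
  assert (E_DD := first_D2_lt_D n T a lD2 lD Hn HT HD2 HD).
  assert (E_AM1 := first_A_le_M1 n T a lA2 lM1 Hn HT HA2 HM1).
  assert (E_AM2 := first_A_eq_M2 n T a lA2 lM2 Hn HT HA2 HM2).
  repeat split; try assumption; try lra.
  unfold Rmin. destruct (Rle_dec lM1 lM2); lra.
Qed.
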